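(* Let $F(a,b,c,d,A)=-2(a+c)-2\bigl[(ac+bd)\cos2A+(bc-ad)\sin2A\bigr]+a^2+b^2+c^2+d^2+1$ and $\mathbb S=F^{-1}(0)\subset\mathbb R^5$. Then $\mathbb S$ has singular points with $A=\pm\pi/2$.
   Context: Here $X_1=a+bi$, $X_2=c+di$ and $F=0$ is $-2\,\mathrm{Re}(X_1+X_2)-2\,\mathrm{Re}(X_1\overline{X}_2e^{-2iA})+|X_1|^2+|X_2|^2+1=0$ (the basic variety). A singular point of $\mathbb S$ is a point of $\mathbb S$ at which the gradient of $F$ vanishes. *)

From Stdlib Require Import Reals.
From Coquelicot Require Import Coquelicot.
Open Scope R_scope.

Definition F (a b c d A : R) : R :=
  -2 * (a + c) - 2 * ((a * c + b * d) * cos (2 * A) + (b * c - a * d) * sin (2 * A))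
  + a ^ 2 + b ^ 2 + c ^ 2 + d ^ 2 + 1.

Definition in_S (a b c d A : R) : Prop := F a b c d A = 0.

Definition singular_point (a b c d A : R) : Prop :=
  in_S a b c d A /\
  is_derive (fun t => F t b c d A) a 0 /\
  is_derive (fun t => F a t c d A) b 0 /\
  is_derive (fun t => F a b t d A) c 0 /\
  is_derive (fun t => F a b c t A) d 0 /\
  is_derive (fun t => F a b c d t) A 0.

(* Take (a,b,c,d) = (1,0,0,0).  There F = 2 - 2 cos 2A, the partial derivatives
   in a and c are -2 + 2a - 2c cos 2A and -2 - 2a cos 2A, those in b and d vanish
   with b, c, d, and the one in A carries a factor of c or d.  So the point is
   singular as soon as cos 2A = -1 and sin 2A = 0, as at A = pi/2 and A = -pi/2. *)
From Stdlib Require Import Reals.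
From Coquelicot Require Import Coquelicot.
Open Scope R_scope.

Lemma singular_point_1000 (A : R) :
  cos (2 * A) = -1 -> sin (2 * A) = 0 -> singular_point 1 0 0 0 A.
Proof.
  intros Hcos Hsin; unfold singular_point, in_S, F.
  split; [rewrite Hcos, Hsin; ring |].
  split; [| split; [| split; [| split]]]; auto_derive; try easy; rewrite ?Hcos, ?Hsin; ring.
Qed.

Lemma cos_2_half_PI : cos (2 * (PI / 2)) = -1.
Proof. replace (2 * (PI / 2)) with PI by field; exact cos_PI. Qed.

Lemma sin_2_half_PI : sin (2 * (PI / 2)) = 0.
Proof. replace (2 * (PI / 2)) with PI by field; exact sin_PI. Qed.

Theorem proposition3p5 :
  (exists a b c d : R, singular_point a b c d (PI / 2)) /\
  (exists a b c d : R, singular_point a b c d (- (PI / 2))).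
Proof.
  split; exists 1, 0, 0, 0; apply singular_point_1000.
  - exact cos_2_half_PI.
  - exact sin_2_half_PI.
  - rewrite Ropp_mult_distr_r_reverse, cos_neg; exact cos_2_half_PI.
  - rewrite Ropp_mult_distr_r_reverse, sin_neg, sin_2_half_PI; ring.
Qed.
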